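(* The DRN $\mathcal X^0$ with transition cocycle $P^0(0,\omega)=I_k$, $P^0(n,\omega)=A_{n-1}\cdots A_0$ ($n\ge1$, $\omega=(A_z)_{z\in\mathbb Z}$) is synchronized, and its synchronization index $J:\Omega\to\mathbb K$ is given by $e_{J(\omega)}=\lim_{n\to\infty}A_{-1}\cdots A_{-n}e_1$ for $\mu$-a.e. $\omega=(A_z)_{z\in\mathbb Z}$. An $\mathcal F$-measurable function $N:\Omega\to\mathbb N$ is a forward (respectively pull-back) synchronization time of $\mathcal X^0$ if and only if $N\ge N_0^+$ (respectively $N\ge N_0^-$) $\mu$-a.e. on $\Omega$. In particular, $\mathcal X^0$ is not uniformly synchronized.
   Context: Fix $k\ge2$, $\mathbb K=\{1,\dots,k\}$, $S=\{s_1,\dots,s_k\}$, $e_1,\dots,e_k$ the canonical basis of $\mathbb R^k$. Let $\mathcal M$ be the set of $k\times k$ matrices with entries in $\{0,1\}$ having exactly one entry $1$ in each column (so $\#\mathcal M=k^k$), and $\nu$ the uniform probability on $\mathcal M$. Let $(\Omega,\mathcal F,\mu)=\bigotimes_{z\in\mathbb Z}(\mathcal M,2^{\mathcal M},\nu)$ and $\theta$ the left shift $\theta((A_z)_{z\in\mathbb Z})=(A_{z+1})_{z\in\mathbb Z}$; this is an invertible ergodic measure-preserving system. $\mathcal X^0$ is the deterministic random network (a Markov process on $S\times\Omega$ moving from fibre $\omega$ to $\theta\omega$) whose transition probabilities $\mathbb P\{X_n=(s_i,\theta^n\omega)\mid X_0=(s_j,\omega)\}$ are the entries $P^0(n,\omega)_{i,j}$.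 $\mathcal X^0$ is synchronized if there is a measurable $N:\Omega\to\mathbb N$ such that, $\mu$-a.e., all columns of $P^0(n,\omega)$ coincide for every $n\ge N(\omega)$; uniformly synchronized if such $N$ can be chosen $\mu$-a.e. constant. A synchronization index is a measurable $J:\Omega\to\mathbb K$ with $P^0(n,\omega)e_{J(\omega)}=e_{J(\theta^n\omega)}$ for all $n\in\mathbb N_0$, $\mu$-a.e. $\omega$. A forward synchronization time is a measurable $N^+:\Omega\to\mathbb N$ with $P^0(n,\omega)e_j=e_{J(\theta^n\omega)}$ for all $j$ and all $n\ge N^+(\omega)$, $\mu$-a.e.; a pull-back synchronization time is a measurable $N^-:\Omega\to\mathbb N$ with $P^0(n,\theta^{-n}\omega)e_j=e_{J(\omega)}$ for all $j$ and $n\ge N^-(\omega)$, $\mu$-a.e. Define $N_0^+(\omega)=\min\{n\in\mathbb N:\operatorname{rank}P^0(n,\omega)=1\}$ if $\lim_{n}\operatorname{rank}P^0(n,\omega)=1$ and $N_0^+(\omega)=1$ otherwise; and $N_0^-(\omega)=\min\{n\in\mathbb N:\operatorname{rank}P^0(n,\theta^{-n}\omega)=1\}$ if $\lim_n\operatorname{rank}P^0(n,\theta^{-n}\omega)=1$ and $N_0^-(\omega)=1$ otherwise. *)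

From HB Require Import structures.
From mathcomp Require Import all_boot all_order all_algebra.
From mathcomp Require Import all_classical all_reals all_analysis.
Set Implicit Arguments. Unset Strict Implicit. Unset Printing Implicit Defensive.
Import Order.TTheory GRing.Theory Num.Theory.
Import numFieldNormedType.Exports.
Local Open Scope classical_set_scope.
Local Open Scope ring_scope.

(* ---------- The finite set M of k x k 0/1 matrices with exactly one 1 per column.
   Such a matrix A is encoded by the map a : 'I_k -> 'I_k sending a column j
   to the (unique) row a j carrying the entry 1 of column j; [mx_of a] is the
   matrix itself. This is a bijection onto M, so #|Mk k| = k^k. *)
Definition Mk (k : nat) : Type := {ffun 'I_k -> 'I_k}.

HB.instance Definition _ k := Finite.on (Mk k).
HB.instance Definition _ k := isPointed.Build (Mk k) [ffun i => i].

Definition mx_of (R : realType) (k : nat) (a : Mk k) : 'M[R]_k :=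
  \matrix_(i, j) (i == a j)%:R.

Definition cyl (k : nat) : set (set (int -> Mk k)) :=
  [set A | exists (z : int) (a : Mk k), A = [set w | w z = a]].
Definition Omega (k : nat) := g_sigma_algebraType (@cyl k).

(* mu = product of uniform probabilities nu on M: every finite-dimensional
   cylinder gets mass (1/k^k)^(number of coordinates). This determines mu
   uniquely (pi-lambda theorem). *)
Definition is_product_uniform (R : realType) (k : nat)
    (P : probability (Omega k) R) : Prop :=
  forall (s : seq int) (a : int -> Mk k), uniq s ->
    P [set w : Omega k | forall z, z \in s -> w z = a z]
      = (((k ^ k)%N%:R)^-1 ^+ size s)%:E.

Definition theta (k : nat) (m : int) (w : Omega k) : Omega k :=
  fun z => w (z + m).

Fixpoint P0 (R : realType) (k : nat) (n : nat) (w : Omega k) : 'M[R]_k :=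
  match n with
  | 0 => 1%:M
  | n'.+1 => mx_of R (w n'%:Z) *m P0 R n' w
  end.

Fixpoint Bprod (R : realType) (k : nat) (n : nat) (w : Omega k) : 'M[R]_k :=
  match n with
  | 0 => 1%:M
  | n'.+1 => Bprod R n' w *m mx_of R (w (- (n'.+1)%:Z))
  end.

Definition e (R : realType) (k : nat) (j : 'I_k) : 'cV[R]_k := delta_mx j 0.

(* the index "1" of the paper (first index, i.e. ordinal 0) *)
Definition first_idx (k : nat) (hk : (1 < k)%N) : 'I_k := Ordinal (ltnW hk).

Definition cols_coincide (R : realType) (k : nat) (A : 'M[R]_k) : Prop :=
  forall i j : 'I_k, col i A = col j A.

Definition measurable_idx (k : nat) (J : Omega k -> 'I_k) : Prop :=
  forall j : 'I_k, measurable (J @^-1` [set j]).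

(* N : Omega -> N = {1,2,...}, F-measurable (nat carries the discrete
   sigma-algebra in mathcomp-analysis) *)
Definition time_fun (k : nat) (N : Omega k -> nat) : Prop :=
  measurable_fun setT N /\ forall w, (0 < N w)%N.

Definition synchronized (R : realType) (k : nat) (P : probability (Omega k) R)
  : Prop :=
  exists N : Omega k -> nat, time_fun N /\
    {ae P, forall w, forall n : nat, (N w <= n)%N -> cols_coincide (P0 R n w)}.

Definition uniformly_synchronized (R : realType) (k : nat)
    (P : probability (Omega k) R) : Prop :=
  exists N : Omega k -> nat, time_fun N /\
    (exists c : nat, {ae P, forall w, N w = c}) /\
    {ae P, forall w, forall n : nat, (N w <= n)%N -> cols_coincide (P0 R n w)}.

Definition sync_index (R : realType) (k : nat) (P : probability (Omega k) R)
    (J : Omega k -> 'I_k) : Prop :=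
  measurable_idx J /\
  {ae P, forall w, forall n : nat,
      P0 R n w *m e R (J w) = e R (J (theta n%:Z w))}.

Definition forward_sync_time (R : realType) (k : nat)
    (P : probability (Omega k) R) (J : Omega k -> 'I_k) (N : Omega k -> nat)
  : Prop :=
  time_fun N /\
  {ae P, forall w, forall (j : 'I_k) (n : nat), (N w <= n)%N ->
      P0 R n w *m e R j = e R (J (theta n%:Z w))}.

Definition pullback_sync_time (R : realType) (k : nat)
    (P : probability (Omega k) R) (J : Omega k -> 'I_k) (N : Omega k -> nat)
  : Prop :=
  time_fun N /\
  {ae P, forall w, forall (j : 'I_k) (n : nat), (N w <= n)%N ->
      P0 R n (theta (- n%:Z) w) *m e R j = e R (J w)}.

Definition rank_to_1 (R : realType) (k : nat) (M : nat -> 'M[R]_k) : Prop :=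
  exists m, forall n, (m <= n)%N -> \rank (M n) = 1%N.

Lemma rank_to_1_ex (R : realType) (k : nat) (M : nat -> 'M[R]_k) :
  rank_to_1 M -> exists n, (0 < n)%N && (\rank (M n) == 1%N).
Proof.
move=> [m Hm]; exists m.+1; rewrite ltn0Sn /=; apply/eqP; apply: Hm.
exact: leqnSn.
Qed.

Definition N0_of (R : realType) (k : nat) (M : nat -> 'M[R]_k) : nat :=
  match pselect (rank_to_1 M) with
  | left H => ex_minn (rank_to_1_ex H)
  | right _ => 1%N
  end.

Definition N0plus (R : realType) (k : nat) (w : Omega k) : nat :=
  N0_of (fun n => P0 R n w).

Definition N0minus (R : realType) (k : nat) (w : Omega k) : nat :=
  N0_of (fun n => P0 R n (theta (- n%:Z) w)).

From HB Require Import structures.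
From mathcomp Require Import all_boot all_order all_algebra.
From mathcomp Require Import all_classical all_reals all_analysis.
From mathcomp Require Import ring zify.
Import Order.TTheory GRing.Theory Num.Theory.
Import numFieldNormedType.Exports.
Local Open Scope classical_set_scope.
Local Open Scope ring_scope.
Set Implicit Arguments. Unset Strict Implicit. Unset Printing Implicit Defensive.

(* A matrix of M has exactly one entry 1 per column, so it is the matrix of a
   map a : K -> K, and products of such matrices are matrices of composite
   maps.  Hence P^0(n,w) is the matrix of the forward composite
   a_{n-1} o ... o a_0, and A_{-1} ... A_{-n} that of the backward composite
   a_{-1} o ... o a_{-n}; such a matrix has rank one, i.e. all its columns
   coincide, exactly when the map is constant.  A composite becomes constant
   as soon as one factor is, and a backward composite then keeps its value.
   Two probabilistic facts are needed: mu-a.e. some coordinate along any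
   injective sequence of positions is a constant map (the first n of them are
   all non-constant with probability at most ((k^k-1)/k^k)^n), and mu is
   invariant under the shift (uniqueness of measures agreeing on cylinders). *)

Definition const_map (X Y : Type) (f : X -> Y) : Prop := forall x y, f x = f y.

Definition const_mapb (X : finType) (Y : eqType) (f : X -> Y) : bool :=
  [forall x, [forall y, f x == f y]].

Lemma const_mapP (X : finType) (Y : eqType) (f : X -> Y) :
  reflect (const_map f) (const_mapb f).
Proof.
apply: (iffP forallP) => [H x y|H x]; first by move/forallP: (H x) => /(_ y) /eqP.
by apply/forallP => y; rewrite (H x y).
Qed.

Section Composites.
Variable k : nat.
Implicit Types (w : Omega k) (t : int) (n m : nat).

Fixpoint seg t n w : 'I_k -> 'I_k :=
  match n with 0 => id | n'.+1 => fun j => w (t + n'%:Z) (seg t n' w j) end.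

Definition fwd n w : 'I_k -> 'I_k := seg 0 n w.
Definition bwd n w : 'I_k -> 'I_k := seg (- n%:Z) n w.

Definition window t n : seq int := [seq t + i%:Z | i <- iota 0 n].

Lemma seg_window t n w w' : (forall z, z \in window t n -> w z = w' z) ->
  forall j, seg t n w j = seg t n w' j.
Proof.
have windowS z n' : (z \in window t n'.+1) = (z \in window t n') || (z == t + n'%:Z).
  by rewrite /window -addn1 iotaD map_cat mem_cat /= inE add0n.
elim: n => //= n IH H j; rewrite H ?IH ?windowS ?eqxx ?orbT //.
by move=> z zw; apply: H; rewrite windowS zw.
Qed.

Lemma seg_split t a b w j : seg t (a + b) w j = seg (t + b%:Z) a w (seg t b w j).
Proof.
elim: a j => //= a IH j; rewrite IH; congr (w _ _).
by rewrite PoszD addrA addrAC.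
Qed.

Lemma seg_theta t n (s : int) w j : seg t n (theta s w) j = seg (t + s) n w j.
Proof. by elim: n j => //= n IH j; rewrite IH /theta; congr (w _ _); rewrite addrAC. Qed.

Lemma fwd_succ n w j : fwd n.+1 w j = w n%:Z (fwd n w j).
Proof. by rewrite /fwd /= add0r. Qed.

Lemma bwd_succ n w j : bwd n.+1 w j = bwd n w (w (- n.+1%:Z) j).
Proof.
rewrite /bwd -addn1 seg_split /= addr0; congr (seg _ _ _ _).
by rewrite PoszD opprD -addrA addNr addr0.
Qed.

Lemma fwd_theta_neg n w j : fwd n (theta (- n%:Z) w) j = bwd n w j.
Proof. by rewrite /fwd seg_theta add0r. Qed.

Lemma bwd_theta n m w j : bwd (n + m) (theta n%:Z w) j = fwd n w (bwd m w j).
Proof.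
rewrite /bwd seg_theta seg_split /fwd.
by congr (seg _ _ _ (seg _ _ _ _)); rewrite PoszD; ring.
Qed.

Lemma fwd_const a b w : (a <= b)%N -> const_map (fwd a w) -> const_map (fwd b w).
Proof.
move=> ab ca i j; rewrite /fwd -(subnK ab) !seg_split.
by congr (seg _ _ _ _); apply: ca.
Qed.

Lemma bwd_const a b w : (a <= b)%N -> const_map (bwd a w) ->
  forall j, bwd b w j = bwd a w j.
Proof.
move=> ab ca j; rewrite /bwd -{1 2}(subnKC ab) seg_split.
have -> : - (a + (b - a))%N%:Z + (b - a)%N%:Z = - a%:Z by rewrite PoszD; ring.
exact: ca.
Qed.

Lemma bwd_const_map a b w : (a <= b)%N -> const_map (bwd a w) ->
  const_map (bwd b w).
Proof. by move=> ab ca i j; rewrite !(bwd_const ab ca); apply: ca. Qed.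

Lemma seg_id t n w : (forall i, (i < n)%N -> w (t + i%:Z) = [ffun j => j]) ->
  forall j, seg t n w j = j.
Proof.
elim: n => //= n IH H j; rewrite IH; last by move=> i lt; apply: H; exact: ltnW.
by rewrite H // ffunE.
Qed.

End Composites.

Section MapMatrices.
Variable R : realType.

Definition fmx m n (f : 'I_n -> 'I_m) : 'M[R]_(m, n) :=
  \matrix_(i, j) (i == f j)%:R.

Lemma fmxM m n p (f : 'I_n -> 'I_m) (g : 'I_p -> 'I_n) :
  fmx f *m fmx g = fmx (fun j => f (g j)).
Proof.
apply/matrixP => i j; rewrite !mxE (bigD1 (g j)) //= !mxE eqxx mulr1 big1 ?addr0 //.
by move=> l /negbTE nl; rewrite !mxE eq_sym nl mulr0.
Qed.

Lemma fmx_ext m n (f g : 'I_n -> 'I_m) : (forall j, f j = g j) -> fmx f = fmx g.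
Proof. by move=> H; apply/matrixP => i j; rewrite !mxE H. Qed.

Lemma fmx_e k (f : 'I_k -> 'I_k) (j : 'I_k) : fmx f *m e R j = e R (f j).
Proof.
apply/matrixP => i z; rewrite !mxE (bigD1 j) //= !mxE eqxx (ord1 z) eqxx mulr1 andbT.
by rewrite big1 ?addr0 // => l /negbTE nl; rewrite !mxE nl mulr0.
Qed.

Lemma e_inj k (i j : 'I_k) : e R i = e R j -> i = j.
Proof.
move/matrixP => /(_ i 0); rewrite !mxE !eqxx /=.
by case: eqP => // _ /eqP; rewrite oner_eq0.
Qed.

Lemma P0_fmx k n (w : Omega k) : P0 R n w = fmx (fwd n w).
Proof.
elim: n => /= [|n ->]; first by apply/matrixP => i j; rewrite !mxE.
by rewrite /mx_of -/(fmx _) fmxM; apply: fmx_ext => j; rewrite fwd_succ.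
Qed.

Lemma Bprod_fmx k n (w : Omega k) : Bprod R n w = fmx (bwd n w).
Proof.
elim: n => /= [|n ->]; first by apply/matrixP => i j; rewrite !mxE.
by rewrite /mx_of -/(fmx _) fmxM; apply: fmx_ext => j; rewrite bwd_succ.
Qed.

(* the columns of fmx f are the vectors e_{f j} *)
Lemma cols_fmx k (f : 'I_k -> 'I_k) : cols_coincide (fmx f) <-> const_map f.
Proof.
split=> H i j.
  move: (H i j) => /matrixP /(_ (f i) 0); rewrite !mxE eqxx.
  by case: eqP => // _ /= /eqP; rewrite oner_eq0.
by apply/matrixP => a b; rewrite !mxE (H i j).
Qed.

Lemma trfmxM m n p (r : 'I_n -> 'I_m) (g : 'I_p -> 'I_m) i j :
  ((fmx r)^T *m fmx g) i j = (r i == g j)%:R.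
Proof.
rewrite !mxE (bigD1 (g j)) //= !mxE eqxx mulr1 big1 ?addr0 ?(eq_sym (g j)) //.
by move=> l /negbTE nl; rewrite !mxE nl mulr0.
Qed.

(* two distinct values of f yield a 2 x 2 identity minor of fmx f *)
Lemma rank_fmx_two_values m n (f : 'I_n -> 'I_m) (a b : 'I_n) :
  f a != f b -> (2 <= \rank (fmx f))%N.
Proof.
move=> nab.
pose pair (X : Type) (x y : X) (q : 'I_2) := if q == 0 then x else y.
have minor : (fmx (pair _ (f a) (f b)))^T *m (fmx f *m fmx (pair _ a b)) = 1%:M.
  rewrite fmxM; apply/matrixP => p q; rewrite trfmxM !mxE /pair.
  case: (p =P 0) => [->|/eqP p0]; case: (q =P 0) => [->|/eqP q0] //=; rewrite ?eqxx //.
  - by rewrite (negbTE nab) eq_sym (negbTE q0).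
  - by rewrite eq_sym (negbTE nab) (negbTE p0).
  - have -> : p = q by apply/val_inj; move: p q p0 q0 => [[|[|p]] hp] [[|[|q]] hq].
    by rewrite eqxx.
have := mxrankM_maxr (fmx (pair _ (f a) (f b)))^T (fmx f *m fmx (pair _ a b)).
by rewrite minor mxrank1 => /leq_trans; apply; exact: mxrankM_maxl.
Qed.

(* a constant map has a rank-one matrix: a column times a row of ones *)
Lemma rank_fmx_const m n (f : 'I_n -> 'I_m) (j0 : 'I_n) :
  const_map f -> \rank (fmx f) = 1%N.
Proof.
move=> cf.
have -> : fmx f = (delta_mx (f j0) (0 : 'I_1) : 'M[R]_(m, 1)) *m const_mx 1.
  apply/matrixP => i j; rewrite !mxE big_ord1 !mxE mulr1 (cf j j0) /=.
  by case: (i == f j0).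
apply/eqP; rewrite eqn_leq (leq_trans (mxrankM_maxl _ _)) ?mxrank_delta //=.
rewrite lt0n mxrank_eq0; apply/eqP => /matrixP /(_ (f j0) j0).
by rewrite !mxE big_ord1 !mxE eqxx mulr1 => /eqP; rewrite oner_eq0.
Qed.

Lemma rank_fmx m n (f : 'I_n -> 'I_m) (j0 : 'I_n) :
  \rank (fmx f) = 1%N <-> const_map f.
Proof.
split=> [r1 a b|]; last exact: rank_fmx_const.
by apply/eqP/negPn/negP => /rank_fmx_two_values; rewrite r1.
Qed.

End MapMatrices.

Section Measurability.
Variable k : nat.
Implicit Types (w : Omega k) (s : seq int).

Definition determined_by s (A : set (Omega k)) : Prop :=
  forall w w', (forall z, z \in s -> w z = w' z) -> A w -> A w'.

Definition upd w (z : int) (a : Mk k) : Omega k :=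
  fun y => if y == z then a else w y.

Lemma coord_measurable (z : int) (a : Mk k) : measurable [set w : Omega k | w z = a].
Proof. by apply: sub_sigma_algebra; exists z, a. Qed.

(* every finitely determined event is measurable: by induction on s, split
   according to the (finitely many) values of the first coordinate *)
Lemma determined_measurable s A : determined_by s A -> measurable A.
Proof.
elim: s A => [|z s IH] A dA.
  have [[w Aw]|nA] := pselect (exists w, A w).
    suff -> : A = setT by exact: measurableT.
    by apply/seteqP; split=> // w' _; apply: dA Aw => y; rewrite in_nil.
  suff -> : A = set0 by exact: measurable0.
  by apply/seteqP; split=> // w' Aw'; apply: nA; exists w'.
have -> : A = \bigcup_(a in [set: Mk k])
    ([set w : Omega k | w z = a] `&` [set w | A (upd w z a)]).
  apply/seteqP; split=> [w Aw|w [a _ [/= wz Au]]].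
    exists (w z) => //; split => //=; apply: dA Aw => y _; rewrite /upd.
    by case: eqP => // ->.
  by apply: dA Au => y _; rewrite /upd; case: eqP => // ->.
apply: fin_bigcup_measurable; first exact: finite_finset.
move=> a _; apply: measurableI; first exact: coord_measurable.
apply: IH => w w' H Au; apply: dA Au => y; rewrite inE => /orP [/eqP ->|ys].
  by rewrite /upd eqxx.
by rewrite /upd; case: eqP => // _; apply: H.
Qed.

Definition cylinder s (a : int -> Mk k) : set (Omega k) :=
  [set w | forall z, z \in s -> w z = a z].

Lemma cylinder_measurable s a : measurable (cylinder s a).
Proof. by apply: (@determined_measurable s) => w w' H Hw z zs; rewrite -H // Hw. Qed.

Lemma prop_measurable (Q : Prop) : measurable [set _ : Omega k | Q].
Proof.
have [q|nq] := pselect Q.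
  suff -> : [set _ : Omega k | Q] = setT by exact: measurableT.
  by apply/seteqP; split.
suff -> : [set _ : Omega k | Q] = set0 by exact: measurable0.
by apply/seteqP; split.
Qed.

Definition at_first (X : Type) (p : nat -> Omega k -> bool)
    (v : nat -> Omega k -> X) (d : X) (w : Omega k) : X :=
  match pselect (exists m, p m w) with
  | left h => v (ex_minn h) w
  | right _ => d
  end.

Lemma at_first_eq (X : Type) (p : nat -> Omega k -> bool) (v : nat -> Omega k -> X)
    (d : X) w m :
  p m w -> (forall i, (i < m)%N -> ~~ p i w) -> at_first p v d w = v m w.
Proof.
move=> pm before; rewrite /at_first; case: pselect => [h|]; last first.
  by move=> nh; exfalso; apply: nh; exists m.
case: ex_minnP => m' pm' min'; congr v; apply/eqP; rewrite eqn_leq min' //=.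
by rewrite leqNgt; apply/negP => /before; rewrite pm'.
Qed.

Lemma at_first_none (X : Type) (p : nat -> Omega k -> bool)
    (v : nat -> Omega k -> X) (d : X) w :
  (forall m, ~~ p m w) -> at_first p v d w = d.
Proof.
by move=> np; rewrite /at_first; case: pselect => // -[m pm]; move: (np m); rewrite pm.
Qed.

Lemma at_first_cases (X : Type) (p : nat -> Omega k -> bool)
    (v : nat -> Omega k -> X) (d : X) w :
  (exists m, [/\ p m w, forall i, (i < m)%N -> ~~ p i w & at_first p v d w = v m w])
  \/ ((forall m, ~~ p m w) /\ at_first p v d w = d).
Proof.
have [h|nh] := pselect (exists m, p m w).
  left; case: (ex_minnP h) => m pm min.
  have before i : (i < m)%N -> ~~ p i w by move=> im; apply/negP => /min; rewrite leqNgt im.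
  by exists m; split => //; exact: at_first_eq.
have np m : ~~ p m w by apply/negP => pm; apply: nh; exists m.
by right; split => //; exact: at_first_none.
Qed.

Lemma at_first_measurable (X : Type) (p : nat -> Omega k -> bool)
    (v : nat -> Omega k -> X) (d : X) :
  (forall m, measurable [set w | p m w]) ->
  (forall m x, measurable [set w | v m w = x]) ->
  forall x, measurable [set w | at_first p v d w = x].
Proof.
move=> mp mv x.
pose first m := [set w | p m w] `&` \bigcap_(i in `I_m) (~` [set w | p i w]).
have -> : [set w | at_first p v d w = x] =
    \bigcup_m (first m `&` [set w | v m w = x]) `|`
    (\bigcap_m (~` [set w | p m w]) `&` [set _ | d = x]).
  apply/seteqP; split=> w /=.
    case: (at_first_cases p v d w) => [[m [pm before ->]]|[np ->]] <-.
      by left; exists m => //; split => //; split => // i /= /before /negP.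
    by right; split => // m _ /=; apply/negP.
  case=> [[m _ [[/= pm before] <-]]|[np <-]].
    by apply: at_first_eq => // i im; apply/negP; apply: before.
  by apply: at_first_none => m; apply/negP; apply: np.
apply: measurableU; last first.
  apply: measurableI; last exact: prop_measurable.
  by apply: bigcapT_measurable => m; exact: measurableC.
apply: bigcupT_measurable => m; apply: measurableI => //; apply: measurableI => //.
by apply: bigcap_measurableType => i _; exact: measurableC.
Qed.

Lemma at_first_measurable_fun (p : nat -> Omega k -> bool)
    (v : nat -> Omega k -> nat) (d : nat) :
  (forall m, measurable [set w | p m w]) ->
  (forall m x, measurable [set w | v m w = x]) ->
  measurable_fun setT (at_first p v d).
Proof.
move=> mp mv _ Y _; rewrite setTI.
have -> : at_first p v d @^-1` Y = \bigcup_(x in Y) [set w | at_first p v d w = x].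
  by apply/seteqP; split=> [w Yw|w [x Yx /= ->]] //; exists (at_first p v d w).
by apply: bigcup_measurable => x _; exact: at_first_measurable.
Qed.

End Measurability.

Lemma le_geometric_le0 (R : realType) (x : \bar R) (r : R) :
  0 <= r -> r < 1 -> (forall n, (x <= (r ^+ n)%:E)%E) -> (x <= 0)%E.
Proof.
move=> r0 r1; case: x => [x| |] // xr; last by have := xr 0%N.
have r_cvg := @cvg_expr R r; rewrite ger0_norm // in r_cvg.
rewrite lee_fin -(cvg_lim _ (r_cvg r1)) //.
apply: limr_ge; first by apply/cvg_ex; exists 0; exact: r_cvg.
by near=> n; rewrite -lee_fin; exact: xr.
Unshelve. all: by end_near.
Qed.

Section CylinderBounds.
Variables (R : realType) (k : nat) (hk : (1 < k)%N) (P : probability (Omega k) R).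
Hypothesis hP : is_product_uniform P.

Definition coord_mass : R := ((k ^ k)%N%:R)^-1.

Lemma card_maps_gt0 : (0 < k ^ k)%N.
Proof. by rewrite expn_gt0 (ltn_trans _ hk). Qed.

Lemma cylinder_mass s a : P (cylinder s a) = (coord_mass ^+ size (undup s))%:E.
Proof.
have -> : cylinder s a = cylinder (undup s) a.
  by apply/seteqP; split=> w H z zs; apply: H; rewrite ?mem_undup in zs *.
by rewrite /coord_mass hP // undup_uniq.
Qed.

(* at least one of the k^k maps (a constant one) is excluded *)
Lemma card_nonconst : (#|[pred a : Mk k | ~~ const_mapb a]| <= (k ^ k).-1)%N.
Proof.
have cT : #|{: Mk k}| = (k ^ k)%N by rewrite /Mk card_ffun card_ord.
have := cardC [pred a : Mk k | ~~ const_mapb a]; rewrite cT.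
have : (0 < #|[predC [pred a : Mk k | ~~ const_mapb a]]|)%N.
  apply/card_gt0P; exists [ffun _ => first_idx hk]; rewrite !inE negbK.
  by apply/const_mapP => i j; rewrite !ffunE.
by move=> const_gt0 <-; rewrite -subn1 -addnBA // leq_addr.
Qed.

Section Positions.
Variables (g : nat -> int) (ginj : injective g).

Definition tuple_cylinder n (t : {ffun 'I_n -> Mk k}) : set (Omega k) :=
  [set w | forall i : 'I_n, w (g i) = t i].

Lemma tuple_cylinderE n (t : {ffun 'I_n -> Mk k}) :
  tuple_cylinder t = cylinder [seq g (nat_of_ord i) | i <- enum 'I_n]
    (fun z => if [pick i : 'I_n | g i == z] is Some i then t i else [ffun j => j]).
Proof.
have ginj_n : injective (fun i : 'I_n => g i) by move=> i j /ginj /val_inj.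
apply/seteqP; split=> w H.
  move=> z /mapP [i _ ->]; case: pickP => [i' /eqP /ginj_n -> //|/(_ i)].
  by rewrite eqxx.
move=> i; have := H (g i) (map_f _ (mem_enum _ i)).
by case: pickP => [i' /eqP /ginj_n -> //|/(_ i)]; rewrite eqxx.
Qed.

Lemma tuple_cylinder_mass n (t : {ffun 'I_n -> Mk k}) :
  measurable (tuple_cylinder t) /\ P (tuple_cylinder t) = (coord_mass ^+ n)%:E.
Proof.
rewrite tuple_cylinderE; split; first exact: cylinder_measurable.
have us : uniq [seq g (nat_of_ord i) | i <- enum 'I_n].
  by rewrite map_inj_uniq ?enum_uniq // => i j /ginj /val_inj.
by rewrite cylinder_mass undup_id // size_map size_enum_ord.
Qed.

Definition nonconst_upto n : set (Omega k) :=
  [set w | forall i, (i < n)%N -> ~ const_map (w (g i))].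

Lemma nonconst_upto_measurable n : measurable (nonconst_upto n).
Proof.
apply: (@determined_measurable _ [seq g i | i <- iota 0 n]) => w w' H Hw i lt.
by rewrite -H; [exact: Hw | apply: map_f; rewrite mem_iota].
Qed.

(* nonconst_upto n is covered by the cylinders of the tuples of non-constant
   maps, at most (k^k - 1)^n of them, each of mass (1/k^k)^n *)
Lemma nonconst_upto_bound n :
  (P (nonconst_upto n) <= ((((k ^ k).-1)%:R * coord_mass) ^+ n)%:E)%E.
Proof.
pose tuples := enum (ffun_on [pred a : Mk k | ~~ const_mapb a] : pred {ffun 'I_n -> Mk k}).
pose A i := tuple_cylinder (nth [ffun=> [ffun j => j]] tuples i).
have cover : nonconst_upto n `<=` \big[setU/set0]_(i < size tuples) A i.
  move=> w Hw; rewrite -bigcup_mkord.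
  have tw : [ffun i : 'I_n => w (g i)] \in tuples.
    rewrite mem_enum; apply/ffun_onP => i; rewrite ffunE inE.
    by apply/negP => /const_mapP; apply: Hw (ltn_ord i).
  exists (index [ffun i : 'I_n => w (g i)] tuples); first by rewrite /= index_mem.
  by move=> i; rewrite /A nth_index // ffunE.
have mA i : measurable (A i) by exact: (tuple_cylinder_mass _).1.
have le_cover : (P (nonconst_upto n) <= P (\big[setU/set0]_(i < size tuples) A i))%E.
  apply: le_measure cover; rewrite inE; first exact: nonconst_upto_measurable.
  by apply: bigsetU_measurable => i _.
apply: le_trans le_cover _.
apply: le_trans (Boole_inequality _ (fun i _ => mA i)) _.
rewrite (eq_bigr (fun=> (coord_mass ^+ n)%:E)); last first.
  by move=> i _; exact: (tuple_cylinder_mass _).2.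
rewrite sumEFin lee_fin sumr_const card_ord /tuples -cardE card_ffun_on card_ord.
rewrite -[_ *+ _]mulr_natl natrX exprMn ler_wpM2r ?exprn_ge0 ?invr_ge0 ?ler0n //.
by rewrite lerXn2r ?nnegrE ?ler0n // ler_nat card_nonconst.
Qed.

(* mu-a.e. some map along the positions g is constant: the exceptional set is
   contained in every nonconst_upto n, so has mass at most r^n with r < 1 *)
Lemma ae_const_along : {ae P, forall w : Omega k, exists i, const_map (w (g i))}.
Proof.
have mN : measurable (\bigcap_n nonconst_upto n).
  by apply: bigcapT_measurable => n; exact: nonconst_upto_measurable.
exists (\bigcap_n nonconst_upto n); split => //; last first.
  by move=> w nw n _ i _ ci; apply: nw; exists i.
set r : R := ((k ^ k).-1)%:R * coord_mass.
have r0 : 0 <= r by rewrite mulr_ge0 ?invr_ge0 ?ler0n.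
have r1 : r < 1.
  rewrite /r /coord_mass ltr_pdivrMr ?ltr0n ?card_maps_gt0 // mul1r ltr_nat.
  by have := card_maps_gt0; lia.
have le_r n : (P (\bigcap_n nonconst_upto n) <= (r ^+ n)%:E)%E.
  apply: le_trans (nonconst_upto_bound n); apply: le_measure; rewrite ?inE //.
  - exact: nonconst_upto_measurable.
  - by move=> w Hw; apply: Hw.
apply/eqP; rewrite eq_le measure_ge0 andbT.
exact: le_geometric_le0 r0 r1 le_r.
Qed.

End Positions.
End CylinderBounds.

Section ShiftInvariance.
Variables (R : realType) (k : nat) (P : probability (Omega k) R).
Hypothesis hP : is_product_uniform P.

Lemma theta_measurable (s : int) : measurable_fun setT (theta s : Omega k -> Omega k).
Proof.
apply: (@measurability _ _ (Omega k) (Omega k) setT (theta s) (@cyl k)) => //.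
move=> _ [B [z [a ->]] <-]; rewrite setTI.
exact: (coord_measurable (z + s) a).
Qed.

Lemma thetaK (s : int) (w : Omega k) : theta s (theta (- s) w) = w.
Proof. by apply/funext => z; rewrite /theta addrK. Qed.

Definition cylinders : set (set (Omega k)) :=
  [set A | exists s a, A = cylinder s a] `|` [set set0].

Lemma cylinders_setI : setI_closed cylinders.
Proof.
move=> A B [[s [a ->]]|->]; last by rewrite set0I; right.
move=> [[t [b ->]]|->]; last by rewrite setI0; right.
have [agree|disagree] := pselect (forall z, z \in s -> z \in t -> a z = b z).
  left; exists (s ++ t), (fun z => if z \in s then a z else b z).
  apply/seteqP; split=> w.
    move=> [Ha Hb] z; rewrite mem_cat; case: ifP => zs /=; first by move=> _; apply: Ha.
    by move=> zt; apply: Hb.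
  move=> Hw; split=> z zs; first by have := Hw z; rewrite mem_cat zs /= => ->.
  have := Hw z; rewrite mem_cat zs orbT; case: ifP => zs' -> //.
  exact: agree.
right; apply/seteqP; split=> // w [Ha Hb]; apply: disagree => z zs zt.
by rewrite -Ha // -Hb.
Qed.

Lemma cylinders_generate : measurable = <<s cylinders >>.
Proof.
apply/seteqP; split.
  apply: smallest_sub; first exact: smallest_sigma_algebra.
  move=> _ [z [a ->]]; apply: sub_sigma_algebra; left; exists [:: z], (fun _ => a).
  by apply/seteqP; split=> w H; [move=> y; rewrite inE => /eqP ->|apply: H; rewrite inE].
apply: smallest_sub; first exact: smallest_sigma_algebra.
by move=> _ [[s [a ->]]|->]; [exact: cylinder_measurable|exact: measurable0].
Qed.

(* the preimage of a cylinder under the shift is the shifted cylinder, of the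
   same mass; by uniqueness of measures the shift preserves mu *)
Lemma theta_preserves (s : int) (A : set (Omega k)) :
  measurable A -> P (theta s @^-1` A) = P A.
Proof.
move=> mA.
have cylT : forall n : nat, cylinders [set: Omega k].
  move=> _; left; exists [::], (fun _ => [ffun j => j]).
  by apply/seteqP; split=> // w _ z; rewrite in_nil.
have cover : \bigcup_(n : nat) [set: Omega k] = [set: Omega k].
  by apply/seteqP; split=> // w _; exists 0%N.
have agree : forall C, cylinders C -> P C = pushforward P (theta s) C.
  move=> _ [[t [a ->]]|->]; last by rewrite /pushforward preimage_set0 !measure0.
  rewrite /pushforward.
  have -> : theta s @^-1` cylinder t a = cylinder [seq z + s | z <- t] (fun y => a (y - s)).
    apply/seteqP; split=> w H z.
      by move=> /mapP [y yt ->]; rewrite addrK; apply: H.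
    by move=> zt; have := H (z + s) (map_f _ zt); rewrite addrK.
  by rewrite !(cylinder_mass hP) undup_map_inj ?size_map //; exact: addIr.
have finite : forall n : nat, (P [set: Omega k] < +oo)%E.
  by move=> _; rewrite probability_setT ltry.
have := @measure_unique _ R (Omega k) cylinders (fun _ => setT) cylinders_generate
  cylinders_setI cylT cover P (pushforward P (theta s)).
by move=> /(_ (theta_measurable s) agree finite A mA) ->.
Qed.

Lemma ae_theta (s : int) (Q : Omega k -> Prop) :
  {ae P, forall w, Q w} -> {ae P, forall w, Q (theta s w)}.
Proof.
move=> [N [mN PN sub]]; exists (theta s @^-1` N); split.
- by rewrite -[X in measurable X]setTI; apply: theta_measurable.
- by rewrite theta_preserves.
- by move=> w /sub.
Qed.

End ShiftInvariance.

Section FirstRankOne.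
Variables (R : realType) (k : nat).

Lemma N0_of_le (M : nat -> 'M[R]_k) m :
  (0 < m)%N -> \rank (M m) = 1%N -> (N0_of M <= m)%N.
Proof.
move=> m0 r1; rewrite /N0_of; case: pselect => [h|_] //.
case: ex_minnP => n _; apply; by rewrite m0 r1 eqxx.
Qed.

Lemma N0_of_rank (M : nat -> 'M[R]_k) :
  rank_to_1 M -> \rank (M (N0_of M)) = 1%N.
Proof.
move=> h; rewrite /N0_of; case: pselect => [h'|//].
by case: ex_minnP => n /andP [_ /eqP].
Qed.

End FirstRankOne.

Section Synchronization.
Variables (R : realType) (k : nat) (hk : (1 < k)%N) (P : probability (Omega k) R).
Hypothesis hP : is_product_uniform P.

Local Notation i0 := (first_idx hk).

Lemma ae_const_coord : {ae P, forall w : Omega k, exists i : nat, const_map (w i%:Z)}.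
Proof. by apply: (ae_const_along hk hP (g := fun i : nat => i%:Z)) => x y []. Qed.

Lemma ae_fwd_const : {ae P, forall w : Omega k, exists n, const_map (fwd n w)}.
Proof.
apply: filterS ae_const_coord => w [i ci].
by exists i.+1 => a b; rewrite !fwd_succ; apply: ci.
Qed.

Lemma ae_bwd_const : {ae P, forall w : Omega k, exists n, const_map (bwd n w)}.
Proof.
apply: filterS (ae_const_along hk hP (g := fun i : nat => - i.+1%:Z) _) => [w [i ci]|].
  by exists i.+1 => a b; rewrite !bwd_succ (ci a b).
by move=> x y /oppr_inj /eqP; rewrite eqz_nat eqSS => /eqP.
Qed.

Definition J0 (w : Omega k) : 'I_k :=
  at_first (fun m w => const_mapb (bwd m w)) (fun m w => bwd m w i0) i0 w.

Lemma J0_measurable : measurable_idx J0.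
Proof.
have bwd_window m (w w' : Omega k) : (forall z, z \in window (- m%:Z) m -> w z = w' z) ->
    forall j, bwd m w j = bwd m w' j by exact: seg_window.
move=> j; apply: at_first_measurable => m.
  apply: (@determined_measurable _ (window (- m%:Z) m)) => w w' H /= /const_mapP c.
  by apply/const_mapP => a b; rewrite -!(bwd_window _ _ _ H) (c a b).
move=> x; apply: (@determined_measurable _ (window (- m%:Z) m)) => w w' H /= <-.
by rewrite (bwd_window _ _ _ H).
Qed.

Lemma J0_val w m : const_map (bwd m w) -> J0 w = bwd m w i0.
Proof.
move=> cm; rewrite /J0.
case: (at_first_cases (fun m w => const_mapb (bwd m w)) (fun m w => bwd m w i0) i0 w).
  move=> [m0 [/const_mapP c0 _ ->]].
  by case: (leqP m0 m) => [/bwd_const|/ltnW /bwd_const] ->.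
by move=> [/(_ m) /const_mapP].
Qed.

Lemma sync_index_J0 : sync_index P J0.
Proof.
split; first exact: J0_measurable.
apply: filterS ae_bwd_const => w [m cm] n.
have cnm : const_map (bwd (n + m) (theta n%:Z w)) by move=> a b; rewrite !bwd_theta (cm a b).
by rewrite P0_fmx fmx_e (J0_val cm) (J0_val cnm) bwd_theta.
Qed.

(* every synchronization index J agrees with J0: J w is the value of any
   constant backward composite, applying the synchronization property at
   time m to theta^{-m} w *)
Lemma sync_index_bwd J : sync_index P J ->
  {ae P, forall w, forall m, const_map (bwd m w) -> J w = bwd m w i0}.
Proof.
move=> [_ HJ]; have := ae_foralln (fun m => ae_theta hP (- m%:Z) HJ).
apply: filterS => w H m cm; have := H m m; rewrite P0_fmx fmx_e thetaK => /(@e_inj R).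
by rewrite fwd_theta_neg => <-; apply: cm.
Qed.

(* the backward products applied to e_1 are eventually constant, equal to
   e_{J w} *)
Lemma sync_index_limit J : sync_index P J ->
  {ae P, forall w : Omega k,
     (fun n : nat => Bprod R n w *m e R i0) @ \oo --> e R (J w)}.
Proof.
move=> sJ; apply: filterS2 (sync_index_bwd sJ) ae_bwd_const => w HJ [m cm].
apply: cvg_near_cst; exists m => // n /= mn.
by rewrite Bprod_fmx fmx_e (bwd_const mn cm) -HJ.
Qed.

Lemma fwd_rank n (w : Omega k) : \rank (P0 R n w) = 1%N <-> const_map (fwd n w).
Proof. by rewrite P0_fmx; exact: rank_fmx i0. Qed.

Lemma bwd_rank n (w : Omega k) :
  \rank (P0 R n (theta (- n%:Z) w)) = 1%N <-> const_map (bwd n w).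
Proof. by rewrite P0_fmx (fmx_ext _ (fwd_theta_neg n w)); exact: rank_fmx i0. Qed.

(* synchronization from time N w on forces rank one at N w; conversely, from
   N_0^+ on the forward composite is constant, so all e_j are sent to the
   image e_{J(theta^n w)} of e_{J w} *)
Lemma fwd_sync_time_char J N : sync_index P J -> time_fun N ->
  forward_sync_time P J N <-> {ae P, forall w, (N0plus R w <= N w)%N}.
Proof.
move=> sJ tN; split=> [[_ HN]|le_N].
  apply: filterS HN => w HN; apply: N0_of_le; first exact: tN.2; apply/fwd_rank => a b.
  apply: (@e_inj R); rewrite -!(@fmx_e R) -P0_fmx.
  by rewrite (HN a (N w) (leqnn _)) (HN b (N w) (leqnn _)).
split => //; apply: (filterS3 _ _ le_N ae_fwd_const sJ.2) => w le [m cm] HJ j n Nn.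
have : \rank (P0 R (N0plus R w) w) = 1%N.
  apply: (N0_of_rank (M := fun n => P0 R n w)); exists m => n' mn'.
  by apply/fwd_rank; exact: fwd_const mn' cm.
move=> /fwd_rank /(fwd_const (leq_trans le Nn)) cn.
by rewrite -(HJ n) P0_fmx !fmx_e (cn j (J w)).
Qed.

(* the same for the pull-back cocycle, whose value is J w by sync_index_bwd *)
Lemma pullback_sync_time_char J N : sync_index P J -> time_fun N ->
  pullback_sync_time P J N <-> {ae P, forall w, (N0minus R w <= N w)%N}.
Proof.
move=> sJ tN; split=> [[_ HN]|le_N].
  apply: filterS HN => w HN; apply: N0_of_le; first exact: tN.2; apply/bwd_rank => a b.
  apply: (@e_inj R); rewrite -!fwd_theta_neg -!(@fmx_e R) -P0_fmx.
  by rewrite (HN a (N w) (leqnn _)) (HN b (N w) (leqnn _)).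
split => //; apply: (filterS3 _ _ le_N ae_bwd_const (sync_index_bwd sJ)).
move=> w le [m cm] HJ j n Nn.
have : \rank (P0 R (N0minus R w) (theta (- (N0minus R w)%:Z) w)) = 1%N.
  apply: (N0_of_rank (M := fun n => P0 R n (theta (- n%:Z) w))); exists m => n' mn'.
  by apply/bwd_rank; exact: bwd_const_map mn' cm.
move=> /bwd_rank /(bwd_const_map (leq_trans le Nn)) cn.
by rewrite P0_fmx fmx_e fwd_theta_neg (HJ n cn) (cn j i0).
Qed.

Definition first_const_time (w : Omega k) : nat :=
  at_first (fun m w => const_mapb (w m%:Z)) (fun m _ => m.+1) 1%N w.

Lemma synchronized_P : synchronized P.
Proof.
exists first_const_time; split.
  split; last first.
    move=> w; rewrite /first_const_time.
    by case: (at_first_cases (fun m w => const_mapb (w m%:Z)) (fun m _ => m.+1) 1%N w)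
      => [[m [_ _ ->]]|[_ ->]].
  apply: at_first_measurable_fun => [m|m x]; last exact: prop_measurable.
  by apply: (@determined_measurable _ [:: m%:Z]) => w w' H /=; rewrite H // inE eqxx.
apply: filterS ae_const_coord.
move=> w [i ci] n; rewrite P0_fmx (@cols_fmx R) /first_const_time.
case: (at_first_cases (fun m w => const_mapb (w m%:Z)) (fun m _ => m.+1) 1%N w).
  move=> [m [/const_mapP cm _ ->]] mn; apply: fwd_const mn _ => a b.
  by rewrite !fwd_succ; apply: cm.
by move=> [/(_ i) /const_mapP].
Qed.

(* the cylinder where the first c maps are the identity has positive mass,
   and there the forward composite at time c is not constant *)
Lemma not_uniformly_synchronized : ~ uniformly_synchronized P.
Proof.
move=> [N [_ [[c hc] hs]]].
have [Z [mZ PZ sub]] : {ae P, forall w, const_map (fwd c w)}.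
  apply: filterS2 hc hs => w Nc Hs.
  by have := Hs c; rewrite Nc leqnn P0_fmx => /(_ isT) /(@cols_fmx R).
pose C := cylinder (window 0 c) (fun _ => [ffun j : 'I_k => j]).
have CZ : C `<=` Z.
  move=> w Cw; apply: sub => cf.
  have fid j : fwd c w j = j.
    by apply: seg_id => i ic; apply: Cw; apply: map_f; rewrite mem_iota.
  by have := cf i0 (Ordinal hk); rewrite !fid => /(congr1 val).
have PC : P C = (coord_mass R k ^+ c)%:E.
  rewrite (cylinder_mass hP) undup_id ?size_map ?size_iota //.
  by rewrite map_inj_uniq ?iota_uniq // => x y /addrI [].
have : (P C <= P Z)%E by apply: le_measure CZ; rewrite ?inE //; exact: cylinder_measurable.
rewrite PZ PC lee_fin leNgt => /negP; apply.
by rewrite exprn_gt0 // invr_gt0 ltr0n (card_maps_gt0 hk).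
Qed.

End Synchronization.

Theorem proposition6p1 (R : realType) (k : nat) (hk : (1 < k)%N)
    (P : probability (Omega k) R) (hP : is_product_uniform P) :
  (* X^0 is synchronized *)
  synchronized P /\
  (* it has a synchronization index, and every synchronization index J
     satisfies e_{J(w)} = lim_n A_{-1} ... A_{-n} e_1 for a.e. w *)
  (exists J : Omega k -> 'I_k, sync_index P J) /\
  (forall J : Omega k -> 'I_k, sync_index P J ->
     {ae P, forall w : Omega k,
        (fun n : nat => Bprod R n w *m e R (first_idx hk)) @ \oo
          --> e R (J w)}) /\
  (* characterization of forward / pull-back synchronization times *)
  (forall J : Omega k -> 'I_k, sync_index P J ->
   forall N : Omega k -> nat, time_fun N ->
     (forward_sync_time P J N <-> {ae P, forall w, (N0plus R w <= N w)%N}) /\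
     (pullback_sync_time P J N <-> {ae P, forall w, (N0minus R w <= N w)%N})) /\
  (* X^0 is not uniformly synchronized *)
  ~ uniformly_synchronized P.
Proof.
split; first exact: synchronized_P.
split; first by exists (J0 hk); exact: sync_index_J0.
split; first by move=> J; exact: sync_index_limit.
split; last exact: not_uniformly_synchronized.
move=> J sJ N tN; split; [exact: fwd_sync_time_char|exact: pullback_sync_time_char].
Qed.
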